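(* Let $L$ be an $R_0$-algebra, $k\in[0,1)$, and $\mu:L\to[0,1]$ a fuzzy subset. Then $\mu$ is an $(\in,\in\vee q_k)$-fuzzy fated filter of $L$ if and only if for every $t\in(0,\tfrac{1-k}{2}]$ the level set $U(\mu;t)=\{x\in L\mid \mu(x)\ge t\}$ is either empty or a fated filter of $L$.
   Context: An $R_0$-algebra is a bounded distributive lattice $(L,\wedge,\vee,0,1)$ with an order-reversing involution $\neg$ and a binary operation $\to$ such that for all $x,y,z\in L$: $x\to y=\neg y\to\neg x$; $1\to x=x$; $(y\to z)\wedge((x\to y)\to(x\to z))=y\to z$; $x\to(y\to z)=y\to(x\to z)$; $x\to(y\vee z)=(x\to y)\vee(x\to z)$; $(x\to y)\vee((x\to y)\to(\neg x\vee y))=1$. A fated filter of $L$ is a nonempty subset $A\subseteq L$ with $1\in A$ such that for all $x,y\in L$ and $a\in A$, $a\to((x\to y)\to x)\in A$ implies $x\in A$. For $x\in L$, $t\in(0,1]$: $x_t\in\mu$ iff $\mu(x)\ge t$; $x_t\,q_k\,\mu$ iff $\mu(x)+t+k>1$; $x_t\in\vee q_k\,\mu$ iff $x_t\in\mu$ or $x_t\,q_k\,\mu$. $\mu$ is an $(\in,\in\vee q_k)$-fuzzy fated filter of $L$ if (1) for all $x\in L$, $t\in(0,1]$: $x_t\in\mu\Rightarrow 1_t\in\vee q_k\,\mu$; and (2) for all $x,a,y\in L$, $t,s\in(0,1]$: if $(a\to((x\to y)\to x))_t\in\mu$ and $a_s\in\mu$ then $x_{\min\{t,s\}}\in\vee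 q_k\,\mu$. *)

From HB Require Import structures.
From mathcomp Require Import all_boot all_order all_algebra.
From mathcomp Require Import reals.
Set Implicit Arguments. Unset Strict Implicit. Unset Printing Implicit Defensive.
Import Order.TTheory GRing.Theory Num.Theory.

Record R0_algebra (d : Order.disp_t) (L : tbDistrLatticeType d)
    (neg : L -> L) (imp : L -> L -> L) : Prop := {
  r0_neg_invol : forall x : L, neg (neg x) = x;
  r0_neg_rev : forall x y : L, (x <= y)%O -> (neg y <= neg x)%O;
  r0_contra : forall x y : L, imp x y = imp (neg y) (neg x);
  r0_one_imp : forall x : L, imp \top%O x = x;
  r0_trans : forall x y z : L,
    Order.meet (imp y z) (imp (imp x y) (imp x z)) = imp y z;
  r0_exch : forall x y z : L, imp x (imp y z) = imp y (imp x z);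
  r0_imp_join : forall x y z : L,
    imp x (Order.join y z) = Order.join (imp x y) (imp x z);
  r0_last : forall x y : L,
    Order.join (imp x y) (imp (imp x y) (Order.join (neg x) y)) = \top%O
}.

Definition fated_filter (d : Order.disp_t) (L : tbDistrLatticeType d)
    (imp : L -> L -> L) (A : L -> Prop) : Prop :=
  (exists x, A x) /\ A \top%O /\
  (forall x y a : L, A a -> A (imp a (imp (imp x y) x)) -> A x).

Local Open Scope ring_scope.

(* x_t \in mu *)
Definition fin (d : Order.disp_t) (L : tbDistrLatticeType d) (R : realType)
    (mu : L -> R) (x : L) (t : R) : Prop := t <= mu x.
(* x_t q_k mu *)
Definition fq (d : Order.disp_t) (L : tbDistrLatticeType d) (R : realType)
    (k : R) (mu : L -> R) (x : L) (t : R) : Prop := 1 < mu x + t + k.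
(* x_t \in\/q_k mu *)
Definition finq (d : Order.disp_t) (L : tbDistrLatticeType d) (R : realType)
    (k : R) (mu : L -> R) (x : L) (t : R) : Prop := fin mu x t \/ fq k mu x t.

Definition fuzzy_fated_filter (d : Order.disp_t) (L : tbDistrLatticeType d)
    (R : realType) (imp : L -> L -> L) (k : R) (mu : L -> R) : Prop :=
  (forall (x : L) (t : R), 0 < t <= 1 -> fin mu x t -> finq k mu \top%O t) /\
  (forall (x a y : L) (t s : R), 0 < t <= 1 -> 0 < s <= 1 ->
     fin mu (imp a (imp (imp x y) x)) t -> fin mu a s ->
     finq k mu x (Num.min t s)).

Definition level_set (d : Order.disp_t) (L : tbDistrLatticeType d) (R : realType)
    (mu : L -> R) (t : R) : L -> Prop := fun x => t <= mu x.

From HB Require Import structures.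
From mathcomp Require Import all_boot all_order all_algebra.
From mathcomp Require Import reals.
From mathcomp Require Import lra.
From Stdlib Require Import Classical.
Import Order.TTheory GRing.Theory Num.Theory.
Local Open Scope ring_scope.

(* For levels [t <= (1 - k) / 2] the quasi-coincidence [x_t q_k mu] already
   forces [x_t \in mu]; conversely, [x_t \in\/q_k mu] at an arbitrary level
   [t] is implied by [x_r \in mu] for all levels [0 < r <= min t ((1 - k) / 2)].
   Hence both conditions on [mu] amount to the fated-filter conditions on the
   level sets below [(1 - k) / 2]. *)

Section CappedLevels.

Variables (R : realType) (k : R).
Hypothesis k_lt1 : k < 1.

Lemma fin_of_finq_capped (m t : R) :
  t <= (1 - k) / 2 -> t <= m \/ 1 < m + t + k -> t <= m.
Proof. by move=> ht [|hq] //; lra. Qed.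

Lemma finq_of_capped_levels (m t : R) : 0 < t ->
  (forall r, 0 < r <= (1 - k) / 2 -> r <= t -> r <= m) ->
  t <= m \/ 1 < m + t + k.
Proof.
move=> ht0 hlev; have hcap0 : 0 < (1 - k) / 2 by rewrite divr_gt0 // subr_gt0.
case: (lerP t m) => [|hmt]; [by left | right].
case: (lerP t ((1 - k) / 2)) => htc.
- suff : t <= m by lra.
  by apply: hlev; rewrite ?ht0 ?htc ?lexx.
- suff : (1 - k) / 2 <= m by lra.
  by apply: hlev; [rewrite hcap0 lexx | exact: ltW].
Qed.

End CappedLevels.

Section LevelSets.

Variables (d : Order.disp_t) (L : tbDistrLatticeType d) (imp : L -> L -> L).
Variables (R : realType) (mu : L -> R).

Lemma level_set_empty_or_fated_filterP (t : R) :
  (forall x, ~ level_set mu t x) \/ fated_filter imp (level_set mu t) <->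
  ((exists x, t <= mu x) ->
   t <= mu \top%O /\
   forall x y a, t <= mu a -> t <= mu (imp a (imp (imp x y) x)) -> t <= mu x).
Proof.
split.
- by case=> [hempty [x hx] | [_ [htop hcl]]]; [case: (hempty x) | split].
- move=> H; case: (classic (exists x, t <= mu x)) => [hne | hempty].
    by right; have [htop hcl] := H hne; split.
  by left=> x hx; apply: hempty; exists x.
Qed.

End LevelSets.

Theorem theorem3p12 (d : Order.disp_t) (L : tbDistrLatticeType d)
    (neg : L -> L) (imp : L -> L -> L) (HL : R0_algebra neg imp)
    (R : realType) (k : R) (hk : 0 <= k < 1)
    (mu : L -> R) (hmu : forall x : L, 0 <= mu x <= 1) :
  fuzzy_fated_filter imp k mu <->
  (forall t : R, 0 < t <= (1 - k) / 2 ->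
     (forall x : L, ~ level_set mu t x) \/ fated_filter imp (level_set mu t)).
Proof.
case/andP: hk => hk0 hk1.
split.
- move=> [htop hcl] t /andP[ht0 ht1]; apply/level_set_empty_or_fated_filterP.
  have ht : 0 < t <= 1 by apply/andP; split; lra.
  move=> [x0 hx0]; split; first exact: fin_of_finq_capped ht1 (htop x0 t ht hx0).
  move=> x y a ha hi; apply: (@fin_of_finq_capped R k (mu x) t ht1).
  by rewrite -[t]minxx; apply: hcl hi ha.
- move=> H; have {}H r hr :=
    iffLR (@level_set_empty_or_fated_filterP _ _ imp _ mu r) (H r hr).
  split.
  + move=> x t /andP[ht0 _] hx; apply: finq_of_capped_levels => // r hr hrt.
    by case: (H r hr); [exists x; apply: le_trans hx|].
  + move=> x a y t s /andP[ht0 _] /andP[hs0 _] hi ha.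
    have hts : 0 < Num.min t s by rewrite lt_min ht0.
    apply: finq_of_capped_levels => // r hr hrts.
    have [hrt hrs] : r <= t /\ r <= s by move: hrts; rewrite le_min => /andP.
    have hra : r <= mu a := le_trans hrs ha.
    by have [_ hcl] := H r hr (ex_intro _ a hra); apply: hcl hra (le_trans hrt hi).
Qed.
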